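(* Let $\mathbf V$ be a monoid variety satisfying the identities $xyx\approx xyx^2$, $xyx\approx x^2yx$ and $(xy)^2\approx (yx)^2$. If $M_\gamma(x^+tyy^+x^+)\notin\mathbf V$, then $\mathbf V$ satisfies the identity $xty^2x\approx xtxy^2x$.
   Context: Words are elements of the free monoid $\mathfrak X^\ast$ over a countably infinite alphabet $\mathfrak X$. A letter is simple in a word if it occurs exactly once. The congruence $\gamma$ on $\mathfrak X^\ast$: $\mathbf u\mathrel\gamma\mathbf v$ iff $\mathbf u,\mathbf v$ have the same set of simple letters and $\mathbf u$ is obtained from $\mathbf v$ by changing the individual exponents of letters (i.e. $\mathbf u=x_1^{e_1}\cdots x_r^{e_r}$, $\mathbf v=x_1^{f_1}\cdots x_r^{f_r}$ with $e_i,f_i\ge1$). For $\gamma$-classes write $\mathtt v\le\mathtt u$ if $\mathtt u=\mathtt p\mathtt v\mathtt s$ for some $\gamma$-classes $\mathtt p,\mathtt s$. For a set $\mathtt W$ of $\gamma$-classes, $M_\gamma(\mathtt W)$ is the Rees quotient of $\mathfrak X^\ast/\gamma$ by the ideal of $\gamma$-classes not $\le$ any member of $\mathtt W$. With $x^+=\{x^k\mid k\ge1\}$, $x^+tyy^+x^+$ denotes the $\gamma$-class of $xty^2x$, and $M_\gamma(x^+tyy^+x^+)=M_\gamma(\{x^+tyy^+x^+\})$. *)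

From Stdlib Require Import IndefiniteDescription.
From mathcomp Require Import all_boot.
Set Implicit Arguments. Unset Strict Implicit. Unset Printing Implicit Defensive.

Definition word := seq nat.

Record monoid := Monoid {
  mcarrier :> Type;
  mmul : mcarrier -> mcarrier -> mcarrier;
  mone : mcarrier }.

Definition is_monoid (M : monoid) : Prop :=
  [/\ (forall a b c : M, mmul a (mmul b c) = mmul (mmul a b) c),
      (forall a : M, mmul (mone M) a = a) &
      (forall a : M, mmul a (mone M) = a)].

Definition eval (M : monoid) (f : nat -> M) (w : word) : M :=
  foldr (fun x acc => mmul (f x) acc) (mone M) w.

Definition sat_id (M : monoid) (u v : word) : Prop :=
  forall f : nat -> M, eval f u = eval f v.

(** A monoid variety, presented (Birkhoff) as the class of all monoids
    satisfying a set Sigma of identities. *)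
Definition in_variety (Sigma : word -> word -> Prop) (M : monoid) : Prop :=
  is_monoid M /\ forall u v, Sigma u v -> sat_id M u v.

Definition variety_sat (Sigma : word -> word -> Prop) (u v : word) : Prop :=
  forall M : monoid, in_variety Sigma M -> sat_id M u v.

Definition expand (xs es : seq nat) : word :=
  flatten [seq nseq e.2 e.1 | e <- zip xs es].

(** u = x1^e1 ... xr^er and v = x1^f1 ... xr^fr with all ei, fi >= 1. *)
Definition exp_change (u v : word) : Prop :=
  exists xs es fs : seq nat,
    [/\ size es = size xs /\ size fs = size xs,
        all (fun e => 0 < e) es && all (fun e => 0 < e) fs,
        u = expand xs es & v = expand xs fs].

Definition simple (x : nat) (w : word) : bool := count_mem x w == 1.

Definition gamma (u v : word) : Prop :=
  (forall x, simple x u = simple x v) /\ exp_change u v.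

Definition le_class (v u : word) : Prop :=
  exists p s : word, gamma u (p ++ v ++ s).

(** W : the set of words whose gamma-classes are the members of the set W.
    [u] lies in the ideal iff it is not <= any member of W. *)
Definition in_ideal (W : word -> Prop) (u : word) : Prop :=
  ~ (exists w, W w /\ le_class u w).

Definition rees (W : word -> Prop) (u v : word) : Prop :=
  gamma u v \/ (in_ideal W u /\ in_ideal W v).

Definition qcarrier (R : word -> word -> Prop) : Type :=
  {P : word -> Prop | exists u, P = R u}.

Definition qclass (R : word -> word -> Prop) (u : word) : qcarrier R :=
  exist (fun P => exists v, P = R v) (R u) (ex_intro (fun v => R u = R v) u erefl).

Definition qrep (R : word -> word -> Prop) (c : qcarrier R) : word :=
  proj1_sig (constructive_indefinite_description _ (proj2_sig c)).

Definition quot_monoid (R : word -> word -> Prop) : monoid :=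
  @Monoid (qcarrier R) (fun a b => qclass R (qrep a ++ qrep b)) (qclass R [::]).

Definition M_gamma (W : word -> Prop) : monoid := quot_monoid (rees W).

(** Letters: x = 0, t = 1, y = 2.  The gamma-class x^+ t y y^+ x^+ of x t y^2 x. *)
Definition W_xtyyx : word -> Prop := gamma [:: 0; 1; 2; 2; 0].

From mathcomp Require Import all_boot zify.
From Stdlib Require Import IndefiniteDescription Classical ProofIrrelevance.
From Stdlib Require Import FunctionalExtensionality PropExtensionality.

Set Implicit Arguments.
Unset Strict Implicit.
Unset Printing Implicit Defensive.

(* Since M_gamma(x^+tyy^+x^+) is a monoid outside V, some identity of V fails in it, and
   evaluating the failure gives an identity a ~ b of V whose sides are not Rees-related; we
   may take the gamma-class of a to be a factor of x^+tyy^+x^+, i.e. a compresses (runs of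
   equal letters merged) to a factor of xtyx and t occurs at most once in a, while b is not
   gamma-related to a.  Sending one letter to z and the others to 1 shows that
   every letter occurs 0, 1 or at least 2 times in a and in b alike, unless M satisfies
   z^k ~ 1 or z ~ z^k for some k, which makes M trivial or (with (xy)^2 ~ (yx)^2) a
   semilattice.  Next substitute x -> x^2, y -> y^2.  As xyx ~ xyx^2 gives x^2 ~ x^3,
   squares are idempotent, so runs of x or y collapse and, by (xy)^2 ~ (yx)^2, so do
   alternations of x^2 and y^2 of length at least four: b reduces to one of finitely many
   normal forms.  A finite check shows that a and the normal form of b always differ in a
   projection to some of the letters x, t, y (possibly after exchanging x and y) that is one
   of twelve small identities, each of which implies xty^2x ~ xtxy^2x. *)

Definition cons_run (c : nat) (s : word) : word :=
  if s is c' :: _ then (if c == c' then s else c :: s) else [:: c].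

Definition compress (w : word) : word := foldr cons_run [::] w.

Lemma cons_run_idem c s : cons_run c (cons_run c s) = cons_run c s.
Proof. by case: s => [|d s] /=; [rewrite eqxx | case: eqP => [->|_] /=; rewrite eqxx]. Qed.

Lemma mem_cons_run x c s : (x \in cons_run c s) = (x == c) || (x \in s).
Proof.
case: s => [|d s] /=; first by rewrite !inE orbF.
by case: eqP => [->|_]; rewrite !inE // orbA orbb.
Qed.

Lemma mem_compress x w : (x \in compress w) = (x \in w).
Proof. by elim: w => [|c w IH] //=; rewrite mem_cons_run IH inE. Qed.

Lemma compress_sorted w : sorted (fun a b => a != b) (compress w).
Proof.
elim: w => [|c w] //=; case: (compress w) => [|d s] //=.
by case: eqP => [_|/eqP cd] //= ->; rewrite cd.
Qed.

Lemma foldr_cons_run_compress S u :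
  foldr cons_run S u = foldr cons_run S (compress u).
Proof.
elim: u => [|c u /= ->] //.
case: (compress u) => [|d r] //=; case: eqP => [->|_] //=.
by rewrite cons_run_idem.
Qed.

Lemma compress_cat u v : compress (u ++ v) = foldr cons_run (compress v) (compress u).
Proof. by rewrite /compress foldr_cat -foldr_cons_run_compress. Qed.

Lemma compress_nseq_cat e x r :
  0 < e -> compress (nseq e x ++ r) = cons_run x (compress r).
Proof. by case: e => // e _; elim: e => //= e <-; rewrite cons_run_idem. Qed.

Lemma compress_expand xs es : size es = size xs -> all (fun e => 0 < e) es ->
  compress (expand xs es) = compress xs.
Proof.
elim: xs es => [|x xs IH] [|e es] //= [Hs] /andP[He Hes].
by rewrite /expand /= compress_nseq_cat // -/(expand xs es) IH.
Qed.

Lemma expand_compress w : exists es, [/\ size es = size (compress w),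
  all (fun e => 0 < e) es & w = expand (compress w) es].
Proof.
elim: w => [|c w [es [Hs Hpos Hw]]]; first by exists [::].
have -> : compress (c :: w) = cons_run c (compress w) by [].
move: Hs Hw; case: (compress w) => [|d r] Hs ->.
  by exists [:: 1]; move/size0nil: Hs => ->.
rewrite /=; case: eqVneq => [<- | cd]; last by exists (1 :: es); rewrite /= Hs Hpos.
case: es Hs Hpos => [|e es] //= [Hs] /andP[He Hes].
by exists (e.+1 :: es); rewrite /= Hs Hes.
Qed.

Lemma prefix_compress x s : prefix (compress x) (compress (x ++ s)).
Proof.
elim: x => [|c x IH] /=; first exact: prefix0s.
case Ex: (compress x) IH => [|d r] IH.
  by case: (compress (x ++ s)) => [|d s'] /=; rewrite ?eqxx //; case: eqP => [->|_] /=;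
    rewrite eqxx ?prefix0s.
case: (compress (x ++ s)) IH => [|d' r'] //= /andP[/eqP <- Hr].
by case: eqP => _ /=; rewrite ?eqxx ?Hr.
Qed.

Lemma suffix_compress p s : suffix (compress s) (compress (p ++ s)).
Proof.
elim: p => [|c p IH] /=; first exact: suffix_refl.
apply: suffix_trans IH _; case: (compress (p ++ s)) => [|d r] /=.
  exact: suffix0s.
by case: eqP => _; [exact: suffix_refl | exact: suffix_cons].
Qed.

Lemma infix_compress p x s : infix (compress x) (compress (p ++ x ++ s)).
Proof. exact: prefix_suffix_trans (prefix_compress x s) (suffix_compress p _). Qed.

Lemma compress_split X Y : 1 \notin X -> 1 \notin Y ->
  compress (X ++ 1 :: Y) = compress X ++ 1 :: compress Y.
Proof.
move=> + nY; elim: X => [|c X IH] /=.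
  move: nY; rewrite -(mem_compress 1 Y).
  by case: (compress Y) => [|d s] //=; rewrite inE eq_sym => /norP[/negbTE ->].
rewrite inE negb_or eq_sym => /andP[c1 /IH ->].
case: (compress X) => [|d s] /=; first by rewrite (negbTE c1).
by case: eqP.
Qed.

Lemma gammaE u v :
  gamma u v <-> (forall x, simple x u = simple x v) /\ compress u = compress v.
Proof.
split=> [[Hs [xs [es [fs [[Hes Hfs] /andP[Pe Pf] Hu Hv]]]]] | [Hs Hc]].
  by split=> //; rewrite Hu Hv !compress_expand.
split=> //; have [es [Hes Pe Hu]] := expand_compress u.
have [fs [Hfs Pf Hv]] := expand_compress v.
by exists (compress u), es, fs; rewrite Pe Pf -Hc in Hfs Hv *.
Qed.

Lemma count_mem_eq0 x u v : compress u = compress v ->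
  (count_mem x u == 0) = (count_mem x v == 0).
Proof.
move=> Hc; have Hx : (x \in u) = (x \in v) by rewrite -(mem_compress x u) -(mem_compress x v) Hc.
by apply/eqP/eqP => /count_memPn H; apply/count_memPn; rewrite ?Hx // -Hx.
Qed.

Lemma addn_eq1_congr a b m n : (m == 0) = (n == 0) -> (m == 1) = (n == 1) ->
  (a + m + b == 1) = (a + n + b == 1).
Proof.
case: m => [|[|m]]; case: n => [|[|n]] //= H0 H1; try discriminate.
by rewrite !addnS !addSn.
Qed.

Lemma gamma_refl u : gamma u u.
Proof. exact/gammaE. Qed.

Lemma gamma_sym u v : gamma u v -> gamma v u.
Proof. by move/gammaE=> [Hs Hc]; apply/gammaE; split=> [x|]; rewrite ?Hs ?Hc. Qed.

Lemma gamma_trans u v w : gamma u v -> gamma v w -> gamma u w.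
Proof.
move/gammaE=> [Hs Hc] /gammaE [Hs' Hc']; apply/gammaE.
by split=> [x|]; rewrite ?Hs ?Hc.
Qed.

Lemma gamma_cat p s u v : gamma u v -> gamma (p ++ u ++ s) (p ++ v ++ s).
Proof.
move/gammaE=> [Hs Hc]; apply/gammaE; split; last by rewrite !compress_cat Hc.
move=> x; rewrite /simple !count_cat !addnA.
by apply: addn_eq1_congr; [exact: count_mem_eq0 | exact: Hs].
Qed.

Section ReesQuotient.

Variable W : word -> Prop.

Local Notation R := (rees W).

Lemma in_ideal_gamma u v : gamma u v -> in_ideal W u -> in_ideal W v.
Proof.
move=> Huv Iu [w [Hw [p [s Hs]]]]; apply: Iu; exists w; split=> //; exists p, s.
exact: gamma_trans Hs (gamma_sym (gamma_cat p s Huv)).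
Qed.

Lemma in_ideal_cat p s u : in_ideal W u -> in_ideal W (p ++ u ++ s).
Proof.
move=> Iu [w [Hw [p' [s' Hs]]]]; apply: Iu; exists w; split=> //.
by exists (p' ++ p), (s ++ s'); move: Hs; rewrite -!catA.
Qed.

Lemma rees_refl u : R u u.
Proof. by left; apply: gamma_refl. Qed.

Lemma rees_sym u v : R u v -> R v u.
Proof. by case=> [G|[Iu Iv]]; [left; apply: gamma_sym | right]. Qed.

Lemma rees_trans u v w : R u v -> R v w -> R u w.
Proof.
case=> [G|[Iu Iv]] [G'|[Iv' Iw]].
- by left; apply: gamma_trans G G'.
- by right; split=> //; apply: in_ideal_gamma (gamma_sym G) Iv'.
- by right; split=> //; apply: in_ideal_gamma G' Iv.
- by right.
Qed.

Lemma rees_cat p s u v : R u v -> R (p ++ u ++ s) (p ++ v ++ s).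
Proof.
case=> [G|[Iu Iv]]; first by left; apply: gamma_cat.
by right; split; apply: in_ideal_cat.
Qed.

Lemma qclass_rees u v : R u v -> qclass R u = qclass R v.
Proof.
move=> Huv; have E : R u = R v.
  apply: functional_extensionality => w; apply: propositional_extensionality.
  by split; apply: rees_trans; [apply: rees_sym |].
exact: subset_eq_compat.
Qed.

Lemma rees_qrep u : R (qrep (qclass R u)) u.
Proof.
rewrite /qrep; case: constructive_indefinite_description => v /= <-.
exact: rees_refl.
Qed.

Lemma qclass_qrep c : qclass R (qrep c) = c.
Proof.
case: c => P HP; rewrite /qrep /=.
case: constructive_indefinite_description => v /= Pv.
exact: subset_eq_compat.
Qed.

Lemma qclass_cat u v : @mmul (M_gamma W) (qclass R u) (qclass R v) = qclass R (u ++ v).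
Proof.
apply: qclass_rees; apply: (@rees_trans _ (u ++ qrep (qclass R v))).
  by have := rees_cat [::] (qrep (qclass R v)) (rees_qrep u).
by have := rees_cat u [::] (rees_qrep v); rewrite !cats0.
Qed.

Lemma M_gamma_monoid : is_monoid (M_gamma W).
Proof.
have one_qclass : mone (M_gamma W) = qclass R [::] by [].
split=> [a b c | a | a].
- by rewrite -(qclass_qrep a) -(qclass_qrep b) -(qclass_qrep c) !qclass_cat catA.
- by rewrite -(qclass_qrep a) one_qclass qclass_cat.
- by rewrite -(qclass_qrep a) one_qclass qclass_cat cats0.
Qed.

Lemma eval_M_gamma (f : nat -> M_gamma W) w :
  eval f w = qclass R (flatten [seq qrep (f n) | n <- w]).
Proof.
elim: w => [|n w IH] //=; rewrite IH -{1}(qclass_qrep (f n)).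
exact: qclass_cat.
Qed.

End ReesQuotient.

Definition word_subst (s : nat -> word) (w : word) : word := flatten (map s w).

Section MonoidEvaluation.

Variable M : monoid.
Hypothesis HM : is_monoid M.

Local Notation "a * b" := (mmul a b).

Definition prod (l : seq M) : M := foldr (@mmul M) (mone M) l.

Lemma prod_nil : prod [::] = mone M.
Proof. by []. Qed.

Lemma prod_cons a l : prod (a :: l) = a * prod l.
Proof. by []. Qed.

Lemma mulmA (a b c : M) : a * (b * c) = a * b * c.
Proof. by case: HM. Qed.

Lemma mul1m (a : M) : mone M * a = a.
Proof. by case: HM. Qed.

Lemma mulm1 (a : M) : a * mone M = a.
Proof. by case: HM. Qed.

Lemma prod_cat l r : prod (l ++ r) = prod l * prod r.
Proof. by elim: l => [|a l IH]; rewrite ?prod_nil ?mul1m // cat_cons !prod_cons IH mulmA. Qed.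

Lemma prod_flatten ls : prod (flatten ls) = prod (map prod ls).
Proof.
by elim: ls => [|l ls IH] //; rewrite [flatten _]/= [map _ _]/= prod_cat prod_cons IH.
Qed.

Lemma eval_prod (f : nat -> M) w : eval f w = prod (map f w).
Proof. by rewrite /prod foldr_map. Qed.

Lemma eval_cat (f : nat -> M) u v : eval f (u ++ v) = eval f u * eval f v.
Proof. by rewrite !eval_prod map_cat prod_cat. Qed.

Lemma eval_word_subst (f : nat -> M) s w :
  eval f (word_subst s w) = eval (fun n => eval f (s n)) w.
Proof. by elim: w => [|n w IH] //=; rewrite eval_cat IH. Qed.

Lemma sat_word_subst s u v : sat_id M u v -> sat_id M (word_subst s u) (word_subst s v).
Proof. by move=> Huv f; rewrite !eval_word_subst. Qed.

Lemma sat_prod u v : sat_id M u v ->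
  forall g : nat -> seq M, prod (flatten (map g u)) = prod (flatten (map g v)).
Proof.
move=> Huv g; have := Huv (fun n => prod (g n)).
by rewrite !eval_prod !prod_flatten -!map_comp.
Qed.

End MonoidEvaluation.

Arguments prod {M} l : simpl never.

Lemma M_gamma_separating_identity Sigma W : ~ in_variety Sigma (M_gamma W) ->
  exists a b, variety_sat Sigma a b /\ ~ rees W a b.
Proof.
move=> notin.
have [u [v [Suv nuv]]] : exists u v, Sigma u v /\ ~ sat_id (M_gamma W) u v.
  apply: NNPP => H; apply: notin; split; first exact: M_gamma_monoid.
  by move=> u v Suv; apply: NNPP => nuv; apply: H; exists u, v.
have [f nf] := not_all_ex_not _ _ nuv.
exists (word_subst (fun n => qrep (f n)) u), (word_subst (fun n => qrep (f n)) v); split.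
  by move=> M [HM HS]; apply: sat_word_subst => //; apply: HS.
by move=> Rab; apply: nf; rewrite !eval_M_gamma; apply: qclass_rees.
Qed.

Definition xtyx : word := [:: 0; 1; 2; 0].

Lemma not_in_ideal_factor a : ~ in_ideal W_xtyyx a ->
  infix (compress a) xtyx /\ count_mem 1 a <= 1.
Proof.
move=> H; have [w [Hw [p [s Hs]]]] : exists w, W_xtyyx w /\ le_class a w.
  by apply: NNPP => H'; apply: H.
have /gammaE [Hsimple Hc] := gamma_trans Hw Hs.
split; first by rewrite -[xtyx]/(compress [:: 0; 1; 2; 2; 0]) Hc infix_compress.
have := Hsimple 1; rewrite /simple /= => /esym/eqP E.
by rewrite -[X in _ <= X]E !count_cat addnCA leq_addr.
Qed.

Definition infixes (s : word) : seq word :=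
  [seq take j (drop i s) | i <- iota 0 (size s).+1, j <- iota 0 (size s).+1].

Lemma infixesP s c : infix c s -> c \in infixes s.
Proof.
case/infixP=> [p [q ->]]; apply/allpairsP; exists (size p, size c).
split; rewrite ?mem_iota /= ?drop_size_cat ?take_size_cat // !size_cat; lia.
Qed.

(* After squaring x and y, all alternations of x and y of length at least four coincide
   (prod_sq_alt); alt4 represents them. *)
Definition alt4 : word := [:: 0; 2; 0; 2].

Definition xy_letter (n : nat) : bool := (n == 0) || (n == 2).

Definition canon (w : word) : word :=
  let c := compress w in if (3 < size c) && all xy_letter c then alt4 else c.

Definition nf (w : word) : word :=
  match count_mem 1 w with
  | 0 => canon w
  | 1 => canon (take (index 1 w) w) ++ 1 :: canon (drop (index 1 w).+1 w)
  | _ => w (* junk case: the words compared in [factors_separated] have at most one t *)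
  end.

Definition blocks : seq word :=
  [:: [::]; [:: 0]; [:: 2]; [:: 0; 2]; [:: 2; 0]; [:: 0; 2; 0]; [:: 2; 0; 2]; alt4].

Definition normal_forms : seq word :=
  blocks ++ [seq c1 ++ 1 :: c2 | c1 <- blocks, c2 <- blocks].

Lemma split_at_t w : count_mem 1 w = 1 ->
  exists X Y, [/\ w = X ++ 1 :: Y, 1 \notin X & 1 \notin Y].
Proof.
move=> w1; have w1' : 1 \in w by rewrite -has_pred1 has_count w1.
exists (take (index 1 w) w), (drop (index 1 w).+1 w).
have Ew : w = take (index 1 w) w ++ 1 :: drop (index 1 w).+1 w.
  by rewrite -{2}(nth_index 0 w1') -drop_nth ?index_mem // cat_take_drop.
move: w1; rewrite {1}Ew count_cat /= addnCA add1n => /succn_inj /eqP.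
by rewrite addn_eq0 => /andP[/eqP/count_memPn ? /eqP/count_memPn ?].
Qed.

Lemma nf_split X Y : 1 \notin X -> 1 \notin Y ->
  nf (X ++ 1 :: Y) = canon X ++ 1 :: canon Y.
Proof.
move=> nX nY; have /count_memPn cX := nX; have /count_memPn cY := nY.
rewrite /nf count_cat /= cX cY index_cat (negbTE nX) /= addn0.
by rewrite take_size_cat // -[(size X).+1]add1n -drop_drop drop_size_cat //= drop0.
Qed.

Lemma canon_blocks B : {subset B <= [:: 0; 2]} -> canon B \in blocks.
Proof.
move=> HB; have S := compress_sorted B.
have {}HB : all xy_letter (compress B).
  by apply/allP => n; rewrite mem_compress => /HB; rewrite !inE.
rewrite /canon HB andbT; case: ltnP => // small; move: HB S small.
case: (compress B) => [|a [|b [|c [|d r]]]] //=; rewrite !inE.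
- by case/andP=> /orP[]/eqP->.
- by case/and3P=> /orP[]/eqP-> /orP[]/eqP->.
- by case/and4P=> /orP[]/eqP-> /orP[]/eqP-> /orP[]/eqP->.
Qed.

Lemma nf_normal_forms w : {subset w <= [:: 0; 1; 2]} -> count_mem 1 w <= 1 ->
  nf w \in normal_forms.
Proof.
have block B : {subset B <= w} -> {subset w <= [:: 0; 1; 2]} -> 1 \notin B ->
    canon B \in blocks.
  move=> Bw Hw nB; apply: canon_blocks => n Bn.
  have n1 : n != 1 by apply: contraNneq nB => <-.
  by move: (Hw n (Bw n Bn)); rewrite !inE (negbTE n1).
move=> Hw; rewrite leq_eqVlt ltnS leqn0 => /orP[/eqP w1 | /eqP w0]; last first.
  by rewrite /nf w0 mem_cat block //; apply/count_memPn.
have [X [Y [Ew nX nY]]] := split_at_t w1.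
rewrite Ew nf_split // mem_cat; apply/orP; right; apply/allpairsP.
exists (canon X, canon Y); split=> //; apply: block => // n Hn;
  by rewrite Ew mem_cat ?inE Hn ?orbT.
Qed.

Lemma canon_small B : (size (compress B) <= 3) || (size (canon B) <= 3) ->
  canon B = compress B.
Proof. by rewrite /canon; case: ifP => // /andP[big _]; rewrite leqNgt big. Qed.

Lemma nf_compress w : count_mem 1 w <= 1 ->
  (size (compress w) <= 3 + count_mem 1 w) || (size (nf w) <= 3 + count_mem 1 w) ->
  nf w = compress w.
Proof.
rewrite leq_eqVlt ltnS leqn0 => /orP[/eqP w1 | /eqP w0]; last first.
  by rewrite /nf w0 addn0 => /canon_small.
have [X [Y [Ew nX nY]]] := split_at_t w1.
rewrite w1 Ew nf_split // compress_split // !size_cat /= => small.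
have sX : (size (compress X) <= 3) || (size (canon X) <= 3) by move: small; lia.
have sY : (size (compress Y) <= 3) || (size (canon Y) <= 3) by move: small; lia.
by rewrite (canon_small sX) (canon_small sY).
Qed.

Definition keep (s w : word) : word := [seq n <- w | n \in s].

Definition swap_letter (n : nat) : nat := if n == 0 then 2 else if n == 2 then 0 else n.

Definition swap_xy (w : word) : word := map swap_letter w.

(* Identities which, read with x and y squared, force xty^2x ~ xtxy^2x (base_pairs_law). *)
Definition base_pairs : seq (word * word) :=
  [:: ([::], [:: 1]); ([::], [:: 2]);
      ([:: 1; 2], [:: 2; 1]); ([:: 1; 2], [:: 2; 1; 2]); ([:: 2; 1], [:: 2; 1; 2]);
      ([:: 2; 0], [:: 0; 2]); ([:: 2; 0], [:: 0; 2; 0]); ([:: 2; 0], [:: 2; 0; 2]);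
      ([:: 2; 0], alt4);
      ([:: 0; 1; 2; 0], [:: 0; 1; 0; 2; 0]); ([:: 0; 1; 2; 0], [:: 0; 1; 2; 0; 2]);
      ([:: 0; 1; 2; 0], [:: 0; 1; 0; 2; 0; 2])].

Definition base_pair (u v : word) : bool :=
  ((u, v) \in base_pairs) || ((v, u) \in base_pairs).

Definition projections : seq (seq nat) :=
  [:: [:: 1]; [:: 2]; [:: 1; 2]; [:: 0; 2]; [:: 0; 1; 2]].

Definition separated (u v : word) : bool :=
  has (fun s => base_pair (nf (keep s u)) (nf (keep s v))) projections ||
  has (fun s => base_pair (nf (keep s (swap_xy u))) (nf (keep s (swap_xy v)))) projections.

Lemma factors_separated :
  all (fun p => all (fun q => (p == q) || separated p q) normal_forms) (infixes xtyx).
Proof. by vm_compute. Qed.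

Lemma short_factors : all (fun c => (1 \in c) || (size c <= 3)) (infixes xtyx).
Proof. by []. Qed.

Section LawsOfTheVariety.

Variable M : monoid.
Hypothesis HM : is_monoid M.
Hypothesis xyx_xyxx : sat_id M [:: 0; 1; 0] [:: 0; 1; 0; 0].
Hypothesis xyx_xxyx : sat_id M [:: 0; 1; 0] [:: 0; 0; 1; 0].
Hypothesis xyxy_yxyx : sat_id M [:: 0; 1; 0; 1] [:: 1; 0; 1; 0].

Definition law_xtyyx : Prop := sat_id M [:: 0; 1; 2; 2; 0] [:: 0; 1; 0; 2; 2; 0].

Lemma prod_cat_congr p s l r :
  prod l = prod r -> prod (p ++ l ++ s) = prod (p ++ r ++ s) :> M.
Proof. by move=> E; rewrite !(prod_cat HM) E. Qed.

Lemma prod_cons_congr (a : M) l r : prod l = prod r -> prod (a :: l) = prod (a :: r).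
Proof. by rewrite !prod_cons => ->. Qed.

(* Closes [prod (p ++ l ++ s) = prod (p ++ r ++ s)] (or its symmetric) from
   [H : prod l = prod r]. *)
Ltac rw_prod H := first
  [ exact (prod_cat_congr [::] _ H) | exact (esym (prod_cat_congr [::] _ H))
  | apply: prod_cons_congr; rw_prod H ].

Tactic Notation "step" constr(L) "using" constr(H) :=
  transitivity (prod L); [rw_prod H | ].

Lemma prod_xlx_xlxx (x : M) l : prod (x :: l ++ [:: x]) = prod (x :: l ++ [:: x; x]).
Proof. exact: (sat_prod HM xyx_xyxx (fun n => if n == 0 then [:: x] else l)). Qed.

Lemma prod_xlx_xxlx (x : M) l : prod (x :: l ++ [:: x]) = prod (x :: x :: l ++ [:: x]).
Proof. exact: (sat_prod HM xyx_xxyx (fun n => if n == 0 then [:: x] else l)). Qed.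

Lemma prod_lmlm_mlml (l m : seq M) : prod (l ++ m ++ l ++ m) = prod (m ++ l ++ m ++ l).
Proof.
have := sat_prod HM xyxy_yxyx (fun n => if n == 0 then l else m).
by rewrite /= !cats0 !catA.
Qed.

Lemma prod_xx_xxx (x : M) : prod [:: x; x] = prod [:: x; x; x].
Proof. exact: (prod_xlx_xlxx x [::]). Qed.

Lemma prod_xxxx_xx (x : M) : prod [:: x; x; x; x] = prod [:: x; x].
Proof. by step [:: x; x; x] using (prod_xx_xxx x); rw_prod (prod_xx_xxx x). Qed.

Lemma prod_nseq_xx (x : M) n : 2 <= n -> prod (nseq n x) = prod [:: x; x].
Proof.
elim: n => [|[|[|n]] IH] //= _.
by rewrite prod_cons IH // -prod_cons -prod_xx_xxx.
Qed.

Lemma law_of_prod :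
  (forall x t y : M, prod [:: x; t; y; y; x] = prod [:: x; t; x; y; y; x]) -> law_xtyyx.
Proof. by move=> H f; rewrite !eval_prod; apply: H. Qed.

Lemma law_of_squares :
  (forall x t y : M, prod [:: x; x; t; y; y; x; x] = prod [:: x; x; t; x; x; y; y; x; x]) ->
  law_xtyyx.
Proof.
move=> H; apply: law_of_prod => x t y.
step [:: x; x; t; y; y; x] using (prod_xlx_xxlx x [:: t; y; y]).
step [:: x; x; t; y; y; x; x] using (prod_xlx_xlxx x [:: t; y; y]).
rewrite H.
step [:: x; t; x; x; y; y; x; x] using (prod_xlx_xxlx x [:: t; x; x; y; y]).
step [:: x; t; x; y; y; x; x] using (prod_xlx_xlxx x [:: t]).
by rw_prod (prod_xlx_xlxx x [:: t; x; y; y]).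
Qed.

Lemma trivial_law : (forall z : M, z = mone M) -> law_xtyyx.
Proof. by move=> H f; rewrite [LHS]H [RHS]H. Qed.

Lemma band_law : (forall z : M, prod [:: z] = prod [:: z; z]) -> law_xtyyx.
Proof.
move=> B; have idem (l : seq M) : prod l = prod (l ++ l).
  by rewrite (prod_cat HM); have := B (prod l); rewrite !prod_cons prod_nil !(mulm1 HM).
have comm (a b : M) : prod [:: a; b] = prod [:: b; a].
  step ([:: a; b] ++ [:: a; b]) using (idem [:: a; b]).
  step ([:: b; a] ++ [:: b; a]) using (prod_lmlm_mlml [:: a] [:: b]).
  by rw_prod (idem [:: b; a]).
apply: law_of_prod => x t y.
step [:: x; t; y; x] using (idem [:: y]).
step [:: x; t; x; y] using (comm y x).
step [:: x; x; t; y] using (comm t x).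
step [:: x; t; y] using (idem [:: x]).
symmetry.
step [:: x; t; x; y; x] using (idem [:: y]).
step [:: x; t; x; x; y] using (comm y x).
step [:: x; t; x; y] using (idem [:: x]).
step [:: x; x; t; y] using (comm t x).
by rw_prod (idem [:: x]).
Qed.

Lemma unit_power_law n : 0 < n -> (forall z : M, prod [::] = prod (nseq n z)) ->
  law_xtyyx.
Proof.
move=> n_gt0 H; apply: trivial_law => z.
have z1 : prod [:: z] = z by rewrite prod_cons prod_nil (mulm1 HM).
case: n n_gt0 H => [|[|n]] // _ H; first by rewrite -z1 -(H z).
have zz1 : prod [::] = prod [:: z; z] by rewrite (H z) prod_nseq_xx.
rewrite -z1 -[mone M]/(prod [::]).
step [:: z; z; z] using zz1.
step [:: z; z] using (prod_xx_xxx z).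
by rewrite zz1.
Qed.

Lemma power_law m n : (forall z : M, prod (nseq m z) = prod (nseq n z)) ->
  ((m == 0) != (n == 0)) || ((m == 1) != (n == 1)) -> law_xtyyx.
Proof.
have band_of k : 2 <= k -> (forall z : M, prod [:: z] = prod (nseq k z)) -> law_xtyyx.
  by move=> k2 H; apply: band_law => z; rewrite H prod_nseq_xx.
move=> H; case: m H => [|[|m]] H; case: n H => [|[|n]] H //= _.
- exact: (unit_power_law (n := 1)).
- exact: (unit_power_law (n := n.+2)).
- by apply: (unit_power_law (n := 1)) => // z; rewrite H.
- exact: (band_of n.+2).
- by apply: (unit_power_law (n := m.+2)) => // z; rewrite H.
- by apply: (band_of m.+2) => // z; rewrite H.
Qed.


(* The substitution x -> x^2, t -> t, y -> y^2 (other letters erased): it makes every letter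
   except t idempotent. *)
Definition sq_block (X T Y : seq M) (n : nat) : seq M :=
  if n == 0 then X ++ X else if n == 1 then T else if n == 2 then Y ++ Y else [::].

Definition sq_image (X T Y : seq M) (w : word) : seq M := flatten (map (sq_block X T Y) w).

Definition sq_sat (u v : word) : Prop := forall x t y : M,
  prod (sq_image [:: x] [:: t] [:: y] u) = prod (sq_image [:: x] [:: t] [:: y] v).

Lemma sq_image_cat X T Y u v :
  sq_image X T Y (u ++ v) = sq_image X T Y u ++ sq_image X T Y v.
Proof. by rewrite /sq_image map_cat flatten_cat. Qed.

Lemma sq_image_cons X T Y n w :
  sq_image X T Y (n :: w) = sq_block X T Y n ++ sq_image X T Y w.
Proof. by []. Qed.

Lemma prod_sq_image X T Y w :
  prod (sq_image X T Y w) = prod (sq_image [:: prod X] [:: prod T] [:: prod Y] w).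
Proof.
elim: w => [|n w IH] //; rewrite !sq_image_cons !(prod_cat HM) IH; congr (mmul _).
by rewrite /sq_block; do !case: ifP => _; rewrite ?(prod_cat HM) ?prod_cons ?prod_nil ?(mulm1 HM).
Qed.

Lemma sq_sat_lists u v : sq_sat u v ->
  forall X T Y, prod (sq_image X T Y u) = prod (sq_image X T Y v).
Proof. by move=> H X T Y; rewrite prod_sq_image H -prod_sq_image. Qed.

Lemma sq_sat_of_sat u v : sat_id M u v -> sq_sat u v.
Proof. by move=> H x t y; apply: (sat_prod HM H). Qed.

Lemma sq_sat_sym u v : sq_sat u v -> sq_sat v u.
Proof. by move=> H x t y. Qed.

Lemma law_of_t_unit : sq_sat [::] [:: 1] -> law_xtyyx.
Proof.
move=> H; apply: trivial_law => z; have := H z z z.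
by rewrite /sq_image /= prod_cons prod_nil (mulm1 HM).
Qed.

Lemma law_of_y_unit : sq_sat [::] [:: 2] -> law_xtyyx.
Proof. by move=> H; apply: (unit_power_law (n := 2)) => // z; apply: (H z z z). Qed.

Lemma law_of_ty_yt : sq_sat [:: 1; 2] [:: 2; 1] -> law_xtyyx.
Proof.
move/sq_sat_lists=> H; apply: law_of_squares => x t y; symmetry.
step [:: x; x; t; y; y; x; x; x; x] using (H [::] [:: x; x] [:: y]).
by rw_prod (prod_xxxx_xx x).
Qed.

Lemma law_of_ty_yty : sq_sat [:: 1; 2] [:: 2; 1; 2] -> law_xtyyx.
Proof.
move/sq_sat_lists=> H; apply: law_of_squares => x t y.
step [:: t; y; y; x; x] using (H [::] [:: t; y; y] [:: x]).
symmetry.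
step [:: t; x; x; y; y; x; x] using (H [::] [:: t; x; x; y; y] [:: x]).
by rw_prod (H [::] [:: y; y] [:: x]).
Qed.

Lemma law_of_yt_yty : sq_sat [:: 2; 1] [:: 2; 1; 2] -> law_xtyyx.
Proof.
move/sq_sat_lists=> H; apply: law_of_squares => x t y.
step [:: x; x; t; y; y] using (H [::] [:: t; y; y] [:: x]).
symmetry.
step [:: x; x; t; x; x; y; y] using (H [::] [:: t; x; x; y; y] [:: x]).
by rw_prod (H [::] [:: t] [:: x]).
Qed.

Lemma law_of_yx_xy : sq_sat [:: 2; 0] [:: 0; 2] -> law_xtyyx.
Proof.
move/sq_sat_lists=> H; apply: law_of_squares => x t y; symmetry.
step [:: x; x; t; y; y; x; x; x; x] using (H [:: x] [::] [:: y]).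
by rw_prod (prod_xxxx_xx x).
Qed.

Lemma law_of_yx_xyx : sq_sat [:: 2; 0] [:: 0; 2; 0] -> law_xtyyx.
Proof.
move/sq_sat_lists=> H; apply: law_of_squares => x t y; symmetry.
by rw_prod (H [:: x] [::] [:: y]).
Qed.

Lemma law_of_yx_yxy : sq_sat [:: 2; 0] [:: 2; 0; 2] -> law_xtyyx.
Proof.
move/sq_sat_lists=> H; apply: law_of_yx_xy => x t y; rewrite /sq_image /=.
step [:: y; y; x; x; x; x] using (prod_xxxx_xx x).
step [:: y; y; x; x; y; y; x; x] using (H [:: x] [::] [:: y]).
step [:: x; x; y; y; x; x; y; y] using (prod_lmlm_mlml [:: y; y] [:: x; x]).
step [:: x; x; y; y; y; y] using (H [:: y] [::] [:: x]).
by rw_prod (prod_xxxx_xx y).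
Qed.

Lemma law_of_yx_xyxy : sq_sat [:: 2; 0] alt4 -> law_xtyyx.
Proof.
move/sq_sat_lists=> H; apply: law_of_yx_xyx => x t y; rewrite /sq_image /=; symmetry.
step [:: x; x; x; x; y; y; x; x; y; y] using (H [:: x] [::] [:: y]).
step [:: x; x; y; y; x; x; y; y] using (prod_xxxx_xx x).
by rw_prod (H [:: x] [::] [:: y]).
Qed.

Lemma law_of_xtyx_xtxyx : sq_sat [:: 0; 1; 2; 0] [:: 0; 1; 0; 2; 0] -> law_xtyyx.
Proof. by move=> H; apply: law_of_squares => x t y; apply: (H x t y). Qed.

Lemma law_of_xtyx_xtyxy : sq_sat [:: 0; 1; 2; 0] [:: 0; 1; 2; 0; 2] -> law_xtyyx.
Proof.
move/sq_sat_lists=> H; apply: law_of_squares => x t y; symmetry.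
step [:: x; x; t; x; x; y; y; x; x; y; y] using (H [:: x] [:: t; x; x] [:: y]).
step [:: x; x; t; y; y; x; x; y; y; x; x] using (prod_lmlm_mlml [:: x; x] [:: y; y]).
step [:: x; x; t; y; y; x; x; x; x] using (H [:: x] [:: t] [:: y]).
by rw_prod (prod_xxxx_xx x).
Qed.

Lemma law_of_xtyx_xtxyxy : sq_sat [:: 0; 1; 2; 0] [:: 0; 1; 0; 2; 0; 2] -> law_xtyyx.
Proof.
move/sq_sat_lists=> H; apply: law_of_squares => x t y; symmetry.
step [:: x; x; t; x; x; x; x; y; y; x; x; y; y] using (H [:: x] [:: t; x; x] [:: y]).
step [:: x; x; t; x; x; y; y; x; x; y; y] using (prod_xxxx_xx x).
by rw_prod (H [:: x] [:: t] [:: y]).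
Qed.

Lemma base_pairs_law u v : (u, v) \in base_pairs -> sq_sat u v -> law_xtyyx.
Proof.
rewrite !inE; do ![case/orP=> [/eqP[-> ->] | ] | move/eqP=> [-> ->]].
all: by [exact: law_of_t_unit | exact: law_of_y_unit | exact: law_of_ty_yt
  | exact: law_of_ty_yty | exact: law_of_yt_yty | exact: law_of_yx_xy
  | exact: law_of_yx_xyx | exact: law_of_yx_yxy | exact: law_of_yx_xyxy
  | exact: law_of_xtyx_xtxyx | exact: law_of_xtyx_xtyxy | exact: law_of_xtyx_xtxyxy].
Qed.

Lemma base_pair_law u v : base_pair u v -> sq_sat u v -> law_xtyyx.
Proof. by case/orP=> [/base_pairs_law | /base_pairs_law H /sq_sat_sym /H]. Qed.

Lemma sq_image_keep s X T Y w :
  sq_image X T Y (keep s w) =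
  sq_image (if 0 \in s then X else [::]) (if 1 \in s then T else [::])
           (if 2 \in s then Y else [::]) w.
Proof.
elim: w => [|n w IH] //; rewrite sq_image_cons -IH /keep [filter _ _]/=.
by case: ifP => ns; rewrite ?sq_image_cons; case: n ns => [|[|[|n]]] ns;
  rewrite /sq_block /= ?ns.
Qed.

Lemma sq_sat_keep s u v : sq_sat u v -> sq_sat (keep s u) (keep s v).
Proof. by move=> /sq_sat_lists H x t y; rewrite !sq_image_keep H. Qed.

Lemma sq_image_swap X T Y w : sq_image X T Y (swap_xy w) = sq_image Y T X w.
Proof.
elim: w => [|n w IH] //; rewrite /swap_xy map_cons !sq_image_cons -/(swap_xy w) IH.
by case: n => [|[|[|n]]].
Qed.

Lemma sq_sat_swap u v : sq_sat u v -> sq_sat (swap_xy u) (swap_xy v).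
Proof. by move=> H x t y; rewrite !sq_image_swap H. Qed.

Lemma prod_sq_block_idem x t y c r : c != 1 ->
  prod (sq_block [:: x] [:: t] [:: y] c ++ sq_block [:: x] [:: t] [:: y] c ++ r) =
  prod (sq_block [:: x] [:: t] [:: y] c ++ r).
Proof.
case: c => [|[|[|c]]] // _; rewrite /sq_block /=.
- by rw_prod (prod_xxxx_xx x).
- by rw_prod (prod_xxxx_xx y).
Qed.

Lemma prod_sq_compress x t y w : 1 \notin w ->
  prod (sq_image [:: x] [:: t] [:: y] (compress w)) =
  prod (sq_image [:: x] [:: t] [:: y] w).
Proof.
elim: w => [|c w IH] //; rewrite inE negb_or eq_sym => /andP[c1 /IH {}IH].
rewrite [compress _]/= sq_image_cons (prod_cat HM) -IH -(prod_cat HM).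
case: (compress w) => [|d s] //=; case: eqP => [<-|_] //.
by rewrite sq_image_cons prod_sq_block_idem.
Qed.

Lemma prod_sq_alt x t y c : all xy_letter c ->
  sorted (fun a b => a != b) c -> 3 < size c ->
  prod (sq_image [:: x] [:: t] [:: y] c) = prod (sq_image [:: x] [:: t] [:: y] alt4).
Proof.
elim: c => [|a c IH] //= /andP[Ha Hc] S Hs.
have Sc : sorted (fun a b => a != b) c by move: S; case: (c) => //= ? ? /andP[].
case: (ltnP 3 (size c)) => Hsz.
  rewrite sq_image_cons (prod_cat HM) (IH Hc Sc Hsz) -(prod_cat HM) /sq_image /=.
  case/orP: Ha => /eqP -> /=.
    by rw_prod (prod_xxxx_xx x).
  step [:: y; y; y; y; x; x; y; y; x; x] using (prod_lmlm_mlml [:: x; x] [:: y; y]).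
  step [:: y; y; x; x; y; y; x; x] using (prod_xxxx_xx y).
  by rw_prod (prod_lmlm_mlml [:: y; y] [:: x; x]).
clear IH; move: Hs Hsz S Ha Hc; case: c {Sc} => [|b [|d [|e [|f r]]]] //= _ _.
case/and4P => n1 n2 n3 _ /orP[]/eqP Ea /and4P[/orP[]/eqP Eb /orP[]/eqP Ed /orP[]/eqP Ee _];
  subst => //.
exact: (prod_lmlm_mlml [:: y; y] [:: x; x]).
Qed.

Lemma prod_sq_canon x t y w : 1 \notin w ->
  prod (sq_image [:: x] [:: t] [:: y] (canon w)) = prod (sq_image [:: x] [:: t] [:: y] w).
Proof.
move=> w1; rewrite -[RHS]prod_sq_compress // /canon; case: ifP => // /andP[big xy].
by apply/esym/prod_sq_alt => //; exact: compress_sorted.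
Qed.

Lemma prod_sq_nf x t y w :
  prod (sq_image [:: x] [:: t] [:: y] (nf w)) = prod (sq_image [:: x] [:: t] [:: y] w).
Proof.
case E: (count_mem 1 w) => [|[|k]]; last by rewrite /nf E.
  by rewrite /nf E prod_sq_canon //; apply/count_memPn.
have [X [Y [Ew nX nY]]] := split_at_t E.
by rewrite Ew nf_split // !sq_image_cat !sq_image_cons !(prod_cat HM) !prod_sq_canon.
Qed.

Lemma sq_sat_nf u v : sq_sat u v -> sq_sat (nf u) (nf v).
Proof. by move=> H x t y; rewrite !prod_sq_nf. Qed.

Lemma separated_law u v : separated u v -> sq_sat u v -> law_xtyyx.
Proof.
case/orP=> /hasP[s _ /base_pair_law law] Huv; apply: law; apply: sq_sat_nf;
  apply: sq_sat_keep => //; exact: sq_sat_swap.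
Qed.

Lemma flatten_letter_nseq (c : nat) (z : M) (w : word) :
  flatten [seq if n == c then [:: z] else [::] | n <- w] = nseq (count_mem c w) z.
Proof. by elim: w => [|n w IH] //=; rewrite IH; case: (n == c). Qed.

Lemma multiplicity_law c a b : sat_id M a b ->
  ((count_mem c a == 0) != (count_mem c b == 0)) ||
  ((count_mem c a == 1) != (count_mem c b == 1)) -> law_xtyyx.
Proof.
move=> Hab; apply: power_law => z.
have := sat_prod HM Hab (fun n => if n == c then [:: z] else [::]).
by rewrite !flatten_letter_nseq.
Qed.

Lemma law_of_gamma_nonisoterm a b : sat_id M a b -> ~ gamma a b ->
  infix (compress a) xtyx -> count_mem 1 a <= 1 -> law_xtyyx.
Proof.
move=> Hab nab fa ta; have [//|nlaw] := classic law_xtyyx.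
have mult c : (count_mem c a == 0) = (count_mem c b == 0) /\
              (count_mem c a == 1) = (count_mem c b == 1).
  have : ~~ (((count_mem c a == 0) != (count_mem c b == 0)) ||
             ((count_mem c a == 1) != (count_mem c b == 1))).
    by apply/negP => /(multiplicity_law Hab).
  by rewrite negb_or !negbK => /andP[/eqP -> /eqP ->].
have same_mem n : (n \in b) = (n \in a).
  by rewrite -!has_pred1 !has_count !lt0n (mult n).1.
have a012 : {subset a <= [:: 0; 1; 2]}.
  by move=> n; rewrite -mem_compress => /(mem_infix fa); rewrite !inE; case/or4P=> /eqP->.
have b012 : {subset b <= [:: 0; 1; 2]} by move=> n; rewrite same_mem; apply: a012.
have tb : count_mem 1 b = count_mem 1 a.
  by case: (mult 1) ta; case: (count_mem 1 a) => [|[|k]] //; case: (count_mem 1 b) => [|[|l]].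
have sa : size (compress a) <= 3 + count_mem 1 a.
  have := allP short_factors _ (infixesP fa); rewrite mem_compress -has_pred1 has_count.
  by move: (size_infix fa) => /= ?; lia.
have nfa : nf a = compress a by rewrite nf_compress // sa.
have tb1 : count_mem 1 b <= 1 by rewrite tb.
have := allP (allP factors_separated _ (infixesP fa)) _ (nf_normal_forms b012 tb1).
rewrite -nfa => /orP[/eqP nfab | sep]; last first.
  by apply: separated_law sep _; apply: sq_sat_nf; apply: sq_sat_of_sat.
have nfb : nf b = compress b by apply: nf_compress => //; rewrite tb -nfab nfa sa orbT.
case: nab; apply/gammaE; split; last by rewrite -nfa nfab nfb.
by move=> c; rewrite /simple (mult c).2.
Qed.

End LawsOfTheVariety.

Theorem lemma4p2 (Sigma : word -> word -> Prop) :
  variety_sat Sigma [:: 0; 1; 0] [:: 0; 1; 0; 0] ->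
  variety_sat Sigma [:: 0; 1; 0] [:: 0; 0; 1; 0] ->
  variety_sat Sigma [:: 0; 1; 0; 1] [:: 1; 0; 1; 0] ->
  ~ in_variety Sigma (M_gamma W_xtyyx) ->
  variety_sat Sigma [:: 0; 1; 2; 2; 0] [:: 0; 1; 0; 2; 2; 0].
Proof.
move=> xyx_xyxx xyx_xxyx xyxy_yxyx notin M MV.
have [a [b [Vab nRab]]] := M_gamma_separating_identity notin.
have law := law_of_gamma_nonisoterm MV.1 (xyx_xyxx M MV) (xyx_xxyx M MV) (xyxy_yxyx M MV).
have [Ia | nIa] := classic (in_ideal W_xtyyx a).
  have nIb : ~ in_ideal W_xtyyx b by move=> Ib; apply: nRab; right.
  have [fb tb] := not_in_ideal_factor nIb.
  apply: (law b a) => // [f | /gamma_sym Gab]; first by rewrite (Vab M MV).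
  by apply: nRab; left.
have [fa ta] := not_in_ideal_factor nIa.
by apply: (law a b) => // [|Gab]; [exact: Vab | apply: nRab; left].
Qed.
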